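(* Let $S$ be a unilateral shift operator of any (nonzero) multiplicity acting on an infinite-dimensional Hilbert space. Then $\Lambda_k(S)=\mathbb{D}$ for all $k\in\mathbb{N}$.
   Context: $\mathbb{D}=\{z\in\mathbb{C}:|z|<1\}$. A shift of multiplicity $\dim\mathcal{K}$ is an operator unitarily equivalent to $S:\ell^2(\mathcal{K})\to\ell^2(\mathcal{K})$, $S(x_0,x_1,\dots)=(0,x_0,x_1,\dots)$, for a nonzero Hilbert space $\mathcal{K}$. For $T\in\mathcal{B}(\mathcal{L})$ and $k\in\mathbb{N}$, $\Lambda_k(T)=\{\lambda\in\mathbb{C}: PTP=\lambda P\text{ for some orthogonal projection } P \text{ of rank } k\}$. *)

From HB Require Import structures.
From mathcomp Require Import all_boot all_order all_algebra.
From mathcomp Require Import complex.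
From mathcomp Require Import classical_sets reals topology normedtype sequences.

Set Implicit Arguments.
Unset Strict Implicit.
Unset Printing Implicit Defensive.

Import Order.TTheory GRing.Theory Num.Theory numFieldNormedType.Exports.
Local Open Scope ring_scope.
Local Open Scope complex_scope.
Local Open Scope classical_set_scope.

Section Defs.
Variable R : realType.
Local Notation C := R[i].

Definition is_hilbert (V : lmodType C) (ip : V -> V -> C) : Prop :=
  [/\ (forall (a : C) (x y z : V), ip (a *: x + y) z = a * ip x z + ip y z),
      (forall x y : V, ip y x = (ip x y)^*),
      (forall x : V, 0 <= ip x x),
      (forall x : V, ip x x = 0 -> x = 0) &
      (forall u : nat -> V,
         (forall e : R, 0 < e -> exists N, forall m n, (N <= m)%N -> (N <= n)%N ->
            ip (u m - u n) (u m - u n) < e%:C) ->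
         exists l : V, forall e : R, 0 < e -> exists N, forall n, (N <= n)%N ->
            ip (u n - l) (u n - l) < e%:C)].

Definition normsq (V : lmodType C) (ip : V -> V -> C) (x : V) : R := complex.Re (ip x x).

Definition in_l2 (K : lmodType C) (ipK : K -> K -> C) (x : nat -> K) : Prop :=
  cvgn (series (fun n => normsq ipK (x n))).

Definition unitary_onto_l2 (L K : lmodType C) (ipL : L -> L -> C) (ipK : K -> K -> C)
    (U : L -> nat -> K) : Prop :=
  [/\ (forall (a : C) (x y : L) n, U (a *: x + y) n = a *: U x n + U y n),
      (forall x : L, series (fun n => normsq ipK (U x n)) @ \oo --> normsq ipL x) &
      (forall y : nat -> K, in_l2 ipK y -> exists x : L, U x = y)].

Definition shiftseq (K : lmodType C) (x : nat -> K) : nat -> K :=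
  fun n => if n is n'.+1 then x n' else 0.

Definition orth_proj (L : lmodType C) (ip : L -> L -> C) (P : L -> L) : Prop :=
  [/\ (forall (a : C) (x y : L), P (a *: x + y) = a *: P x + P y),
      (forall x, P (P x) = P x) &
      (forall x y, ip (P x) y = ip x (P y))].

Definition has_rank (L : lmodType C) (P : L -> L) (k : nat) : Prop :=
  exists e : 'I_k -> L,
    (forall c : 'I_k -> C, \sum_(i < k) c i *: e i = 0 -> forall i, c i = 0) /\
    (forall y : L, (exists x, P x = y) <-> exists c : 'I_k -> C, y = \sum_(i < k) c i *: e i).

Definition higher_rank_numrange (L : lmodType C) (ip : L -> L -> C) (k : nat) (T : L -> L)
  : set C :=
  [set lam | exists P : L -> L,
     [/\ orth_proj ip P, has_rank P k & forall x, P (T (P x)) = lam *: P x]].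

Definition unit_disk : set C := [set z | `|z| < 1].

End Defs.

(* If P S P = lam P with P of positive rank, take x <> 0 with P x = x.  Then
   <S x, x> = lam <x, x>, and since S is an isometry
   |S x - lam x|^2 = (1 - |lam|^2) |x|^2, so |lam| <= 1; equality would make x an
   eigenvector of the shift, which has none.  Conversely, for |lam| < 1 there is a
   finitely supported scalar sequence c with sum |c_n|^2 = 1 and
   sum c_n conj(c_(n+1)) = lam.  Copies of c w (w a unit vector of K) placed on k
   disjoint blocks of indices, each followed by a gap, are k orthonormal vectors x_j
   with <S x_i, x_j> = lam delta_ij; the projection onto their span compresses S to
   lam. *)

From HB Require Import structures.
From mathcomp Require Import all_boot all_order all_algebra.
From mathcomp Require Import complex.
From mathcomp Require Import boolp classical_sets reals topology normedtype sequences.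
From mathcomp Require Import ring lra zify.

Set Implicit Arguments.
Unset Strict Implicit.
Unset Printing Implicit Defensive.

Import Order.TTheory GRing.Theory Num.Theory numFieldNormedType.Exports.
Local Open Scope ring_scope.
Local Open Scope complex_scope.
Local Open Scope classical_set_scope.

Lemma conjcM (R : rcfType) (x y : R[i]) : (x * y)^*%C = x^*%C * y^*%C.
Proof. exact: rmorphM. Qed.

Lemma conjcX (R : rcfType) (x : R[i]) n : (x ^+ n)^*%C = x^*%C ^+ n.
Proof. exact: rmorphXn. Qed.

Lemma exists_polar (R : realType) (lam : R[i]) :
  exists r u, [/\ 0 <= r, `|lam| = r%:C, `|u| = 1 & lam = r%:C * u].
Proof.
have [->|lam_neq0] := eqVneq lam 0.
  by exists 0, 1; rewrite normr0 normr1 mul0r.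
have [r r_ge0 lam_r] : exists2 r : R, 0 <= r & `|lam| = r%:C.
  by rewrite normc_def; eexists; last reflexivity; apply: sqrtr_ge0.
have r_neq0 : r%:C != 0 by rewrite -lam_r normr_eq0.
exists r, (lam / r%:C); split => //; last by rewrite mulrC divfK.
by rewrite normf_div -lam_r normr_id divff // normr_eq0.
Qed.

Definition translate (V : zmodType) (a : nat) (f : nat -> V) (n : nat) : V :=
  if (a <= n)%N then f (n - a)%N else 0.

Section Translate.
Variable V : zmodType.
Implicit Types (f : nat -> V) (a D M n : nat).

Lemma translate_eq0_ge f a D n : (forall m, (D <= m)%N -> f m = 0) ->
  (a + D <= n)%N -> translate a f n = 0.
Proof. by move=> fD le_n; rewrite /translate; case: leqP => // _; apply: fD; lia. Qed.

Lemma translate_block_eq0 f D i n : (forall m, (D <= m)%N -> f m = 0) ->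
  (n %/ D != i)%N -> translate (i * D) f n = 0.
Proof.
move=> fD; rewrite /translate; case: leqP => // iD_n ne_i; apply: fD.
rewrite leqNgt; apply: contra ne_i => lt_D.
by rewrite -(subnKC iD_n) divnMDl ?divn_small ?addn0 //; lia.
Qed.

Lemma sum_translate f a D M : (a + D <= M)%N -> (forall m, (D <= m)%N -> f m = 0) ->
  \sum_(n < M) translate a f n = \sum_(n < D) f n.
Proof.
move=> le_M fD; rewrite -(big_mkord xpredT) (big_cat_nat (leq0n a)) /=; last by lia.
rewrite big1_seq ?add0r => [|n /andP[_]]; last first.
  by rewrite mem_index_iota /translate => /andP[_ /ltn_geF ->].
rewrite (@big_cat_nat _ _ _ (a + D)) ?leq_addr //= [X in _ + X]big1_seq ?addr0.
  rewrite -{1}[a]add0n big_addn addKn big_mkord.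
  by apply: eq_bigr => i _; rewrite /translate leq_addl addnK.
by move=> n /andP[_]; rewrite mem_index_iota => /andP[/translate_eq0_ge -> //].
Qed.

End Translate.

Lemma shiftseq_translate (R : realType) (V : lmodType R[i]) (f : nat -> V) a :
  shiftseq (translate a f) = translate a (shiftseq f).
Proof.
apply: funext => -[|n] /=; rewrite /translate; first by rewrite sub0n; case: ifP.
case: (leqP a n) => [le_an|lt_na]; first by rewrite (leqW le_an) subSn.
by case: leqP => // _; rewrite (_ : n.+1 - a = 0)%N //; lia.
Qed.

Lemma cvg_series_finsupp (R : realType) (u : nat -> R) M :
  (forall n, (M <= n)%N -> u n = 0) -> series u @ \oo --> \sum_(n < M) u n.
Proof.
move=> uM; apply: cvg_near_cst; near=> N.
have le_MN : (M <= N)%N by near: N; exists M.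
rewrite /series /= (big_cat_nat (leq0n M) le_MN) /= big_mkord.
rewrite [X in _ + X]big1_seq ?addr0 //.
by move=> n /andP[_]; rewrite mem_index_iota => /andP[/uM].
Unshelve. all: by end_near.
Qed.

Section InnerProduct.
Variables (R : realType) (V : lmodType R[i]) (ip : V -> V -> R[i]).
Hypothesis ip_hilbert : is_hilbert ip.

Lemma ip_linear a x y z : ip (a *: x + y) z = a * ip x z + ip y z.
Proof. by case: ip_hilbert. Qed.

Lemma ipC x y : ip y x = (ip x y)^*%C.
Proof. by case: ip_hilbert. Qed.

Lemma ipxx_ge0 x : 0 <= ip x x.
Proof. by case: ip_hilbert. Qed.

Lemma ipxx_eq0 x : ip x x = 0 -> x = 0.
Proof. by case: ip_hilbert => _ _ _ /(_ x). Qed.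

Lemma ip0l z : ip 0 z = 0.
Proof.
have := ip_linear 1 0 0 z.
by rewrite scaler0 addr0 mul1r -{1}[ip 0 z]addr0 => /addrI <-.
Qed.

Lemma ipDl x y z : ip (x + y) z = ip x z + ip y z.
Proof. by rewrite -[x in LHS]scale1r ip_linear mul1r. Qed.

Lemma ipZl a x z : ip (a *: x) z = a * ip x z.
Proof. by rewrite -[_ *: _]addr0 ip_linear ip0l addr0. Qed.

Lemma ipNl x z : ip (- x) z = - ip x z.
Proof. by rewrite -scaleN1r ipZl mulN1r. Qed.

Lemma ipBl x y z : ip (x - y) z = ip x z - ip y z.
Proof. by rewrite ipDl ipNl. Qed.

Lemma ip0r z : ip z 0 = 0.
Proof. by rewrite ipC ip0l conjc0. Qed.

Lemma ipDr x y z : ip z (x + y) = ip z x + ip z y.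
Proof. by rewrite ipC ipDl rmorphD /= -!ipC. Qed.

Lemma ipZr a x z : ip z (a *: x) = a^*%C * ip z x.
Proof. by rewrite ipC ipZl rmorphM /= -ipC. Qed.

Lemma ipNr x z : ip z (- x) = - ip z x.
Proof. by rewrite ipC ipNl rmorphN /= -ipC. Qed.

Lemma ipBr x y z : ip z (x - y) = ip z x - ip z y.
Proof. by rewrite ipC ipBl rmorphB /= -!ipC. Qed.

Lemma ip_suml (I : Type) (r : seq I) (P : pred I) (F : I -> V) z :
  ip (\sum_(i <- r | P i) F i) z = \sum_(i <- r | P i) ip (F i) z.
Proof. by elim/big_rec2: _ => [|i y1 y2 _ <-]; rewrite ?ip0l ?ipDl. Qed.

Lemma ip_sumr (I : Type) (r : seq I) (P : pred I) (F : I -> V) z :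
  ip z (\sum_(i <- r | P i) F i) = \sum_(i <- r | P i) ip z (F i).
Proof. by elim/big_rec2: _ => [|i y1 y2 _ <-]; rewrite ?ip0r ?ipDr. Qed.

(* On R[i], [0 <= z] forces [z] to be real. *)
Lemma ipxx_real x : ip x x = (normsq ip x)%:C.
Proof.
by have := ipxx_ge0 x; rewrite /normsq; case: (ip x x) => a b /andP[/eqP /= -> _].
Qed.

Lemma normsq0 : normsq ip 0 = 0.
Proof. by rewrite /normsq ip0l. Qed.

Lemma ip_polarization x y : ip x y =
  (ip (x + y) (x + y) - ip (x - y) (x - y)
   + 'i * (ip (x + 'i *: y) (x + 'i *: y) - ip (x - 'i *: y) (x - 'i *: y))) / 4%:R.
Proof.
have conj_i : 'i^*%C = - 'i :> R[i] by apply/eqP; rewrite eq_complex /= oppr0 !eqxx.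
have sqr_i : 'i * 'i = -1 :> R[i] by rewrite -expr2 sqr_i.
rewrite !(ipDl, ipBl, ipDr, ipBr, ipNl, ipNr, ipZl, ipZr) conj_i.
apply: (@mulIf _ 4%:R); first by rewrite pnatr_eq0.
rewrite mulfVK ?pnatr_eq0 //.
rewrite !(mulrDr, mulrBr, mulrN, mulNr, mulrA, opprK) !sqr_i; ring.
Qed.

Lemma ip_translate a (f g : nat -> V) n :
  ip (translate a f n) (translate a g n) = translate a (fun m => ip (f m) (g m)) n.
Proof. by rewrite /translate; case: leqP; rewrite ?ip0l. Qed.

Lemma block_ip D k (f g : nat -> V) (i j : 'I_k) :
  (forall n, (D <= n)%N -> f n = 0) -> (forall n, (D <= n)%N -> g n = 0) ->
  \sum_(n < k * D) ip (translate (i * D) f n) (translate (j * D) g n) =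
    (i == j)%:R * \sum_(n < D) ip (f n) (g n).
Proof.
move=> fD gD; have [<-|ne_ij] := eqVneq i j.
  rewrite mul1r; under eq_bigr do rewrite ip_translate.
  apply: sum_translate => [|n /fD ->]; last by rewrite ip0l.
  by rewrite -mulSnr leq_mul2r ltn_ord orbT.
rewrite mul0r big1 // => n _; have [eq_i|ne_i] := eqVneq (n %/ D)%N i.
  by rewrite (translate_block_eq0 gD) ?ip0r // eq_i.
by rewrite (translate_block_eq0 fD ne_i) ip0l.
Qed.

Lemma exists_unit_vector : (exists v : V, v != 0) -> exists w, ip w w = 1.
Proof.
case=> v /eqP v_neq0; set t := normsq ip v.
have t_gt0 : 0 < t.
  rewrite lt_def -ler0c -ipxx_real ipxx_ge0 andbT.
  by apply: contra_notN v_neq0 => /eqP t0; apply: ipxx_eq0; rewrite ipxx_real -/t t0.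
exists ((Num.sqrt t)^-1%:C *: v).
rewrite ipZl ipZr conjc_real ipxx_real -/t -!rmorphM /=.
by rewrite mulrA -invfM -expr2 sqr_sqrtr ?ltW // mulVf ?gt_eqF.
Qed.

Lemma in_l2_finsupp (y : nat -> V) M : (forall n, (M <= n)%N -> y n = 0) -> in_l2 ip y.
Proof.
by move=> yM; apply/cvg_ex; exists (\sum_(n < M) normsq ip (y n));
  apply: cvg_series_finsupp => n /yM ->; rewrite normsq0.
Qed.

End InnerProduct.

Section Unitary.
Variables (R : realType) (K L : lmodType R[i]).
Variables (ipK : K -> K -> R[i]) (ipL : L -> L -> R[i]) (U : L -> nat -> K).
Hypotheses (HK : is_hilbert ipK) (HL : is_hilbert ipL) (HU : unitary_onto_l2 ipL ipK U).

Lemma unitary_linear a x y n : U (a *: x + y) n = a *: U x n + U y n.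
Proof. by case: HU. Qed.

Lemma unitary_isometry x : series (fun n => normsq ipK (U x n)) @ \oo --> normsq ipL x.
Proof. by case: HU. Qed.

Lemma unitary_onto y : in_l2 ipK y -> exists x, U x = y.
Proof. by case: HU => _ _ /(_ y). Qed.

Lemma unitary0 n : U 0 n = 0.
Proof.
have := unitary_linear 1 0 0 n.
by rewrite scaler0 addr0 scale1r -{1}[U 0 n]addr0 => /addrI <-.
Qed.

Lemma unitaryD x y n : U (x + y) n = U x n + U y n.
Proof. by rewrite -[x in LHS]scale1r unitary_linear scale1r. Qed.

Lemma unitaryZ a x n : U (a *: x) n = a *: U x n.
Proof. by rewrite -[_ *: _]addr0 unitary_linear unitary0 addr0. Qed.

Lemma unitaryN x n : U (- x) n = - U x n.
Proof. by rewrite -scaleN1r unitaryZ scaleN1r. Qed.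

Lemma unitaryB x y n : U (x - y) n = U x n - U y n.
Proof. by rewrite unitaryD unitaryN. Qed.

Lemma unitary_normsq_finsupp x M : (forall n, (M <= n)%N -> U x n = 0) ->
  ipL x x = \sum_(n < M) ipK (U x n) (U x n).
Proof.
move=> xM; have sum_cvg : series (fun n => normsq ipK (U x n)) @ \oo -->
    \sum_(n < M) normsq ipK (U x n).
  by apply: cvg_series_finsupp => n /xM ->; rewrite normsq0.
rewrite (ipxx_real HL) -(cvg_lim (@Rhausdorff R) (unitary_isometry (x := x))).
rewrite (cvg_lim (@Rhausdorff R) sum_cvg) rmorph_sum /=.
by apply: eq_bigr => n _; rewrite -ipxx_real.
Qed.

Lemma unitary_ip_finsupp x y M : (forall n, (M <= n)%N -> U x n = 0) ->
  (forall n, (M <= n)%N -> U y n = 0) -> ipL x y = \sum_(n < M) ipK (U x n) (U y n).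
Proof.
move=> xM yM; rewrite (ip_polarization HL) !(@unitary_normsq_finsupp _ M);
  try by move=> n le_Mn;
    rewrite ?(unitaryD, unitaryN, unitaryZ) xM // yM // ?scaler0 ?oppr0 ?addr0.
symmetry; under eq_bigr => n _ do rewrite (ip_polarization HK (U x n)).
rewrite -mulr_suml big_split sumrB /= -mulr_sumr sumrB.
by congr (_ / _); congr (_ - _ + _ * (_ - _)); apply: eq_bigr => n _;
  rewrite ?(unitaryD, unitaryN, unitaryZ).
Qed.

Lemma unitary_inj : injective U.
Proof.
move=> x y eq_xy; apply/eqP; rewrite -subr_eq0; apply/eqP; apply: (ipxx_eq0 HL).
by rewrite (@unitary_normsq_finsupp _ 0) ?big_ord0 // => n _; rewrite unitaryB eq_xy subrr.
Qed.

End Unitary.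

Lemma has_rank_fixed_neq0 (R : realType) (V : lmodType R[i]) (P : V -> V) k :
  (0 < k)%N -> has_rank P k -> (forall x, P (P x) = P x) -> exists2 x : V, x != 0 & P x = x.
Proof.
move=> k_gt0 [e [e_free e_span]] P_idem; pose i0 := Ordinal k_gt0.
have sum_delta : \sum_(i < k) ((i == i0)%:R : R[i]) *: e i = e i0.
  by rewrite (bigD1 i0) //= scale1r big1 ?addr0 // => i /negPf ->; rewrite scale0r.
exists (e i0).
  apply/eqP => e0; have := e_free (fun i => (i == i0)%:R).
  by rewrite sum_delta => /(_ e0 i0) /eqP; rewrite eqxx oner_eq0.
have [y <-] : exists y, P y = e i0 by apply/e_span; exists (fun i => (i == i0)%:R).
by rewrite P_idem.
Qed.

Section Compression.
Variables (R : realType) (V : lmodType R[i]) (ip : V -> V -> R[i]) (S : V -> V).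
Hypothesis HV : is_hilbert ip.

Lemma compression_ip P lam x : orth_proj ip P -> (forall y, P (S (P y)) = lam *: P y) ->
  P x = x -> ip (S x) x = lam * ip x x.
Proof.
by case=> _ _ P_sa PSP Px; rewrite -{2}Px -P_sa -{1}Px PSP Px (ipZl HV).
Qed.

Lemma isometry_defect lam x : ip (S x) (S x) = ip x x -> ip (S x) x = lam * ip x x ->
  ip (S x - lam *: x) (S x - lam *: x) = ip x x * (1 - `|lam| ^+ 2).
Proof.
move=> S_iso Sxx; have xSx : ip x (S x) = lam^*%C * ip x x.
  by rewrite (ipC HV) Sxx rmorphM /= -(ipC HV).
rewrite !(ipBl HV, ipBr HV, ipZl HV, ipZr HV) S_iso Sxx xSx sqr_normc; ring.
Qed.

Lemma numrange_sub_disk k lam :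
  (forall x, ip (S x) (S x) = ip x x) ->
  (forall mu x, `|mu| = 1 -> S x = mu *: x -> x = 0) ->
  (0 < k)%N -> higher_rank_numrange ip k S lam -> `|lam| < 1.
Proof.
move=> S_iso S_eigen k_gt0 [P [P_proj P_rank PSP]].
have [_ P_idem _] := P_proj.
have [x x_neq0 Px] := has_rank_fixed_neq0 k_gt0 P_rank P_idem.
have defect := isometry_defect (S_iso x) (compression_ip P_proj PSP Px).
have xx_gt0 : 0 < ip x x.
  by rewrite lt_def (ipxx_ge0 HV) andbT; apply: contra x_neq0 => /eqP /(ipxx_eq0 HV) ->.
have := ipxx_ge0 HV (S x - lam *: x).
rewrite defect pmulr_rge0 // subr_ge0 expr_le1 // => lam_le1.
rewrite lt_neqAle lam_le1 andbT; apply: contra x_neq0 => /eqP lam1.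
apply/eqP/(S_eigen lam x lam1)/eqP; rewrite -subr_eq0; apply/eqP/(ipxx_eq0 HV).
by rewrite defect lam1 expr1n subrr mulr0.
Qed.

Hypothesis S_linear : forall a x y, S (a *: x + y) = a *: S x + S y.
HB.instance Definition _ := GRing.isLinear.Build R[i] V V *:%R S S_linear.

Lemma numrange_of_orthonormal k lam (x : 'I_k -> V) :
  (forall i j, ip (x i) (x j) = (i == j)%:R) ->
  (forall i j, ip (S (x i)) (x j) = lam * (i == j)%:R) ->
  higher_rank_numrange ip k S lam.
Proof.
move=> x_orth Sx_orth.
have coord a i : ip (\sum_(j < k) a j *: x j) (x i) = a i.
  rewrite (ip_suml HV) (bigD1 i) //= (ipZl HV) x_orth eqxx mulr1 big1 ?addr0 //.
  by move=> j /negPf ji; rewrite (ipZl HV) x_orth ji mulr0.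
pose P y := \sum_(j < k) ip y (x j) *: x j.
exists P; split.
- split=> [a y z|y|y z].
  + rewrite /P scaler_sumr -big_split; apply: eq_bigr => j _.
    by rewrite (ip_linear HV) scalerDl scalerA.
  + by apply: eq_bigr => j _; rewrite coord.
  + rewrite (ip_suml HV) /P (ip_sumr HV); apply: eq_bigr => j _.
    by rewrite (ipZl HV) (ipZr HV) -(ipC HV) mulrC.
- exists x; split=> [a a0 i|y]; first by rewrite -(coord a i) a0 (ip0l HV).
  split=> [[z <-]|[a ->]]; first by exists (fun j => ip z (x j)).
  by exists (\sum_(j < k) a j *: x j); apply: eq_bigr => j _; rewrite coord.
- move=> y; rewrite /P linear_sum /= scaler_sumr; apply: eq_bigr => j _.
  rewrite scalerA (ip_suml HV) (bigD1 j) //= linearZ_LR (ipZl HV) Sx_orth eqxx mulr1.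
  rewrite big1 ?addr0 1?mulrC //.
  by move=> i /negPf ij; rewrite linearZ_LR (ipZl HV) Sx_orth ij !mulr0.
Qed.

End Compression.

Lemma exists_real_profile (R : realType) (r : R) : 0 <= r < 1 ->
  exists d (a : nat -> R), [/\ forall n, (d <= n)%N -> a n = 0,
    \sum_(n < d) a n ^+ 2 = 1 & \sum_(n < d) a n * a n.+1 = r].
Proof.
case/andP=> r_ge0 r_lt1.
have [N N_gt0 rN] : exists2 N, (0 < N)%N & r * N.+1%:R <= N%:R.
  have r'_gt0 : 0 < 1 - r by rewrite subr_gt0.
  have := @archi_boundP _ (1 - r)^-1; rewrite invr_ge0 ltW // => /(_ isT).
  move: (Num.Def.archi_bound _) => m; rewrite -[X in X < _]div1r ltr_pdivrMr // => lt1.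
  by exists m.+1 => //; rewrite -!natr1; nra.
pose p := Num.sqrt (r / N%:R); pose q := Num.sqrt (1 - r * N.+1%:R / N%:R).
have N_neq0 : N%:R != 0 :> R by rewrite pnatr_eq0 -lt0n.
have p2 : p ^+ 2 = r / N%:R by rewrite sqr_sqrtr // divr_ge0.
have q2 : q ^+ 2 = 1 - r * N.+1%:R / N%:R.
  by rewrite sqr_sqrtr // subr_ge0 ler_pdivrMr ?mul1r // ltr0n.
(* a = (p, ..., p, 0, q) with N + 1 copies of p: the gap keeps q out of the
   correlation N p^2 = r, and the choice of N makes q^2 = 1 - (N + 1) p^2 >= 0. *)
pose a n := if (n <= N)%N then p else if n == N.+2 then q else 0.
have a_le n : (n <= N)%N -> a n = p by rewrite /a => ->.
exists N.+3, a; split.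
- by move=> n le_n; rewrite /a !ifF //; lia.
- rewrite 2!big_ord_recr /= (eq_bigr (fun=> p ^+ 2)) => [|i _]; last by rewrite a_le // -ltnS.
  rewrite sumr_const card_ord /a ltnn eqxx !ifF; try lia.
  by rewrite expr0n addr0 p2 q2 -mulr_natr; field.
- rewrite 3!big_ord_recr /= (eq_bigr (fun=> p ^+ 2)) => [|i _]; last first.
    by rewrite !a_le ?expr2 // ltnW.
  rewrite sumr_const card_ord /a leqnn ltnn eqxx !ifF; try lia.
  by rewrite !(mulr0, mul0r) !addr0 p2 -[LHS]mulr_natr divfK.
Qed.

Lemma exists_profile (R : realType) (lam : R[i]) : `|lam| < 1 ->
  exists d (c : nat -> R[i]), [/\ forall n, (d <= n)%N -> c n = 0,
    \sum_(n < d) c n * (c n)^*%C = 1 & \sum_(n < d) c n * (c n.+1)^*%C = lam].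
Proof.
move=> lam_lt1; have [r [u [r_ge0 lam_r u1 ->]]] := exists_polar lam.
have [|d [a [a_vanish a_sq a_corr]]] := @exists_real_profile _ r.
  by rewrite r_ge0 -ltcR -lam_r.
(* Twisting a by the powers of u^* keeps |c_n| = |a_n| and turns each
   correlation term a_n a_(n+1) into a_n a_(n+1) u. *)
have uu : u^*%C * u = 1 by rewrite mulrC -sqr_normc u1 expr1n.
have c_sq n : (a n)%:C * u^*%C ^+ n * ((a n)%:C * u^*%C ^+ n)^*%C = (a n ^+ 2)%:C.
  by rewrite conjcM conjc_real conjcX conjcK mulrACA -exprMn uu expr1n mulr1 -rmorphM -expr2.
have c_corr n : (a n)%:C * u^*%C ^+ n * ((a n.+1)%:C * u^*%C ^+ n.+1)^*%C =
    (a n * a n.+1)%:C * u.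
  rewrite conjcM conjc_real conjcX conjcK exprSr mulrACA [u^*%C ^+ n * _]mulrA.
  by rewrite -exprMn uu expr1n mul1r -rmorphM.
exists d, (fun n => (a n)%:C * u^*%C ^+ n); split.
- by move=> n /a_vanish ->; rewrite mul0r.
- by under eq_bigr do rewrite c_sq; rewrite -rmorph_sum /= a_sq.
- by under eq_bigr do rewrite c_corr; rewrite -mulr_suml -rmorph_sum /= a_corr.
Qed.

Section Shift.
Variables (R : realType) (K L : lmodType R[i]).
Variables (ipK : K -> K -> R[i]) (ipL : L -> L -> R[i]) (U : L -> nat -> K) (S : L -> L).
Hypotheses (HK : is_hilbert ipK) (HL : is_hilbert ipL) (HU : unitary_onto_l2 ipL ipK U).
Hypothesis US : forall x, U (S x) = shiftseq (U x).

Lemma shift_linear a x y : S (a *: x + y) = a *: S x + S y.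
Proof.
apply: (unitary_inj HK HL HU); apply: funext => n.
rewrite (unitary_linear HU) !US.
by case: n => [|n] /=; rewrite ?scaler0 ?addr0 ?(unitary_linear HU).
Qed.

Lemma shift_isometry x : ipL (S x) (S x) = ipL x x.
Proof.
rewrite !(ipxx_real HL); congr (_%:C).
have := unitary_isometry HU (x := S x); rewrite US -cvg_shiftS.
have -> : (fun n => series (fun m => normsq ipK (shiftseq (U x) m)) n.+1) =
          series (fun m => normsq ipK (U x m)).
  by apply: funext => n; rewrite /series /= big_nat_recl //= normsq0 ?add0r.
move/(cvg_lim (@Rhausdorff R)) => <-.
by rewrite (cvg_lim (@Rhausdorff R) (unitary_isometry HU (x := x))).
Qed.

Lemma shift_eigenvector_eq0 lam x : lam != 0 -> S x = lam *: x -> x = 0.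
Proof.
move=> lam_neq0 Sx; apply: (unitary_inj HK HL HU); apply: funext => n.
have Ux m : shiftseq (U x) m = lam *: U x m by rewrite -US Sx (unitaryZ HU).
rewrite (unitary0 HU); elim: n => [|n IHn];
  [move: (Ux 0) | move: (Ux n.+1); rewrite /= IHn];
  by move=> /esym /eqP; rewrite scaler_eq0 (negPf lam_neq0) => /eqP.
Qed.

Lemma shift_numrange_disk k lam : (exists v : K, v != 0) -> `|lam| < 1 ->
  higher_rank_numrange ipL k S lam.
Proof.
move=> K_neq0 lam_lt1; have [d [c [c_vanish c_sq c_corr]]] := exists_profile lam_lt1.
have [w w1] := exists_unit_vector HK K_neq0.
(* The spare slot at the end of each block keeps the shifted block inside it. *)
pose D := d.+1; pose f n := c n *: w.
have f_ip m n : ipK (f m) (f n) = c m * (c n)^*%C by rewrite (ipZl HK) (ipZr HK) w1 mulr1.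
have f_vanish n : (D <= n)%N -> f n = 0.
  by move=> /ltnW /c_vanish; rewrite /f => ->; rewrite scale0r.
have Sf_vanish n : (D <= n)%N -> shiftseq f n = 0.
  by case: n => // n; rewrite ltnS /= /f => /c_vanish ->; rewrite scale0r.
have /choice[X UX] j : exists x, U x = translate (j * D) f.
  apply: (unitary_onto HU); apply: (in_l2_finsupp HK (M := j * D + D)) => n.
  exact: translate_eq0_ge.
have USX j : U (S (X j)) = translate (j * D) (shiftseq f) by rewrite US UX shiftseq_translate.
have block_le (i : 'I_k) n : (k * D <= n)%N -> (i * D + D <= n)%N.
  by apply: leq_trans; rewrite -mulSnr leq_mul2r ltn_ord orbT.
have X_vanish (i : 'I_k) n : (k * D <= n)%N -> U (X i) n = 0.
  by move=> /(block_le i); rewrite UX; apply: translate_eq0_ge.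
have SX_vanish (i : 'I_k) n : (k * D <= n)%N -> U (S (X i)) n = 0.
  by move=> /(block_le i); rewrite USX; apply: translate_eq0_ge.
apply: (numrange_of_orthonormal HL shift_linear (x := fun i : 'I_k => X i)) => i j.
- rewrite (unitary_ip_finsupp HK HL HU (X_vanish i) (X_vanish j)).
  under eq_bigr do rewrite !UX; rewrite (block_ip HK i j f_vanish f_vanish).
  under eq_bigr do rewrite f_ip; rewrite big_ord_recr /= c_vanish //.
  by rewrite mul0r addr0 c_sq mulr1.
- rewrite (unitary_ip_finsupp HK HL HU (SX_vanish i) (X_vanish j)).
  under eq_bigr do rewrite USX UX; rewrite (block_ip HK i j Sf_vanish f_vanish) mulrC.
  congr (_ * _).
  rewrite big_ord_recl /= (ip0l HK) add0r -c_corr.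
  by apply: eq_bigr => n _; rewrite f_ip.
Qed.

End Shift.

Theorem lemma2p6 (R : realType)
    (K : lmodType R[i]) (ipK : K -> K -> R[i]) (HK : is_hilbert ipK)
    (HKnz : exists v : K, v != 0)
    (L : lmodType R[i]) (ipL : L -> L -> R[i]) (HL : is_hilbert ipL)
    (S : L -> L) (U : L -> nat -> K) (HU : unitary_onto_l2 ipL ipK U)
    (HS : forall x : L, U (S x) = shiftseq (U x))
    (k : nat) (hk : (0 < k)%N) :
  higher_rank_numrange ipL k S = @unit_disk R.
Proof.
apply/seteqP; split=> lam; rewrite /unit_disk /=.
- apply: (numrange_sub_disk HL) hk => [x | mu x mu1].
    exact: (shift_isometry HK HL HU HS).
  by apply: (shift_eigenvector_eq0 HK HL HU HS); rewrite -normr_eq0 mu1 oner_eq0.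
- exact: (shift_numrange_disk HK HL HU HS).
Qed.
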